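(* The family $\mathfrak{F}^*=\{\tilde{\omega},\tilde{\omega^*}\}\cup\{\tilde{L}_n:n\geq 2\}$ is $\mathbf{PL}$-learnable.
   Context: Partial orders are structures in the language $\{\leq\}$. $\omega$ and $\omega^*$ are the linear orders of the natural numbers and of the negative integers; $L_n$ is the finite linear order with $n$ elements. For a partial order $L$, $\tilde{L}$ is $L$ together with infinitely many new elements that are pairwise incomparable and incomparable to the elements of $L$ (presented with domain $\mathbb{N}$). All structures have domain $\mathbb{N}$ and are identified with their atomic diagrams. For a family $\mathfrak{K}$ (countable set of pairwise nonisomorphic structures), $\mathcal{S}\restriction_s$ is the finite substructure of $\mathcal{S}$ on $\{0,\dots,s\}$ and $\mathrm{LD}(\mathfrak{K})$ is the set of structures with domain $\mathbb{N}$ isomorphic to a member of $\mathfrak{K}$. A learner is an arbitrary function from $\{\mathcal{S}\restriction_s:\mathcal{S}\in\mathrm{LD}(\mathfrak{K})\}$ to $\{\ulcorner\mathcal{A}\urcorner:\mathcal{A}\in\mathfrak{K}\}\cup\{?\}$. $\mathfrak{K}$ is $\mathbf{PL}$-learnable if some learner $\mathbf{M}$ satisfies: for every $\mathcal{S}\in\mathrm{LD}(\mathfrak{K})$ and $\mathcal{A}\in\mathfrak{K}$, $\{n:\mathbf{M}(\mathcal{S}\restriction_n)=\ulcorner\mathcal{A}\urcorner\}$ is infinite iff $\mathcal{A}\cong\mathcal{S}$. *)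

From mathcomp Require Import all_boot.
Set Implicit Arguments. Unset Strict Implicit. Unset Printing Implicit Defensive.

(* A structure in the language {<=} with domain nat, identified with its
   atomic diagram: the characteristic function of the relation <=. *)
Definition structure := nat -> nat -> bool.

Definition iso (S A : structure) : Prop :=
  exists f : nat -> nat, bijective f /\ forall x y, S x y = A (f x) (f y).

(* Members with "tilde": even numbers carry the partial order L, odd numbers
   are the infinitely many new pairwise incomparable elements. *)

Definition omega_t : structure := fun x y =>
  if odd x || odd y then x == y else x./2 <= y./2.

Definition omegastar_t : structure := fun x y =>
  if odd x || odd y then x == y else y./2 <= x./2.

Definition Ln_t (n : nat) : structure := fun x y =>
  if (x < n) && (y < n) then x <= y else x == y.

Definition Fstar (i : nat) : structure :=
  match i with
  | 0 => omega_t
  | 1 => omegastar_t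
  | n => Ln_t n
  end.

Definition LD (S : structure) : Prop := exists i, iso S (Fstar i).

Definition finsub (s : nat) := {ffun 'I_s.+1 -> {ffun 'I_s.+1 -> bool}}.
Definition restr (S : structure) (s : nat) : finsub s :=
  [ffun i : 'I_s.+1 => [ffun j : 'I_s.+1 => S i j]].

(* A learner: arbitrary function from finite substructures to codes of
   members of the family (Some i) or '?' (None). *)
Definition learner := forall s : nat, finsub s -> option nat.

Definition infinitely_often (P : nat -> Prop) : Prop :=
  forall m, exists n, m <= n /\ P n.

Definition PL_learnable_Fstar : Prop :=
  exists M : learner, forall S : structure, LD S ->
    forall i : nat,
      infinitely_often (fun n => M n (restr S n) = Some i) <-> iso S (Fstar i).

From mathcomp Require Import all_boot.

Set Implicit Arguments.
Unset Strict Implicit.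
Unset Printing Implicit Defensive.

(* The learner looks at the newest element s of the stage.  If s is comparable
   to an earlier element, it lies on the infinite chain: the learner guesses
   omega~ if s lies above everything earlier comparable to it, (omega^* )~ if
   below, and ? otherwise.  If s is isolated so far, it guesses L_n~ for the
   number n of elements of the stage comparable to some other one.
   On a copy of L_n~ all n chain elements eventually appear and every later
   element is isolated, so the guess settles on n.  On a copy of omega~ every
   later chain element lies above the copy of the least element, so (omega^* )~
   is guessed only finitely often; the chain elements that exceed all earlier
   ones (records) make omega~ guessed infinitely often; and the growing chain
   rules out each L_n~.  The case of (omega^* )~ is the dual one. *)

Definition related (S : structure) x y := (x != y) && (S x y || S y x).
Definition in_chain S s x := has (related S x) (iota 0 s.+1).
Definition chain_size S s := count (in_chain S s) (iota 0 s.+1).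
Definition related_to_past S s := has (related S s) (iota 0 s).
Definition above_past (S : structure) s :=
  all (fun y => related S y s ==> S y s) (iota 0 s).
Definition below_past (S : structure) s :=
  all (fun y => related S y s ==> S s y) (iota 0 s).

Definition guess S s : option nat :=
  if related_to_past S s then
    if above_past S s && ~~ below_past S s then Some 0
    else if below_past S s && ~~ above_past S s then Some 1 else None
  else if 1 < chain_size S s then Some (chain_size S s) else None.

Definition of_finsub s (F : finsub s) : structure := fun x y =>
  [&& x <= s, y <= s & F (inord x) (inord y)].

Definition guess_learner : learner := fun s F => guess (of_finsub F) s.

Definition eventually (P : nat -> Prop) := exists N, forall n, N <= n -> P n.

Definition identifies S j :=
  infinitely_often (fun s => guess S s = Some j) /\
  forall i, i != j -> eventually (fun s => guess S s != Some i).

Lemma mem_iota0 n x : (x \in iota 0 n) = (x < n).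
Proof. by rewrite mem_iota. Qed.

Lemma eventually_io P : eventually P -> infinitely_often P.
Proof.
move=> [N PN] m; exists (maxn m N); split; first exact: leq_maxl.
by apply: PN; exact: leq_maxr.
Qed.

Lemma eventually_gt_image (h : nat -> nat) n :
  eventually (fun s => forall i, i < n -> h i < s).
Proof.
exists (\max_(i < n) h i).+1 => s le_s i lt_in; apply: leq_trans le_s.
by rewrite ltnS (leq_bigmax (F := fun i : 'I_n => h i) (Ordinal lt_in)).
Qed.

Lemma guess_local S1 S2 s :
  (forall x y, x <= s -> y <= s -> S1 x y = S2 x y) -> guess S1 s = guess S2 s.
Proof.
move=> eqS.
have eq_rel x y : x <= s -> y <= s -> related S1 x y = related S2 x y.
  by move=> xs ys; rewrite /related !eqS.
rewrite /guess.
have -> : related_to_past S1 s = related_to_past S2 s.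
  by apply: eq_in_has => y; rewrite mem_iota0 => /ltnW ys; rewrite eq_rel.
have -> : above_past S1 s = above_past S2 s.
  by apply: eq_in_all => y; rewrite mem_iota0 => /ltnW ys; rewrite eq_rel ?eqS.
have -> : below_past S1 s = below_past S2 s.
  by apply: eq_in_all => y; rewrite mem_iota0 => /ltnW ys; rewrite eq_rel ?eqS.
suff -> : chain_size S1 s = chain_size S2 s by [].
apply: eq_in_count => x; rewrite mem_iota0 ltnS => xs.
by apply: eq_in_has => y; rewrite mem_iota0 ltnS => ys; rewrite eq_rel.
Qed.

Lemma guess_learner_restr S s : guess_learner (restr S s) = guess S s.
Proof.
apply: guess_local => x y xs ys.
by rewrite /of_finsub xs ys !ffunE !inordK.
Qed.

Lemma guess_one S s : guess S s = Some 1 -> related_to_past S s && below_past S s.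
Proof.
rewrite /guess; case: (related_to_past S s).
  by case: (above_past S s); case: (below_past S s).
by case: ifP => // lt1 [c1]; rewrite c1 in lt1.
Qed.

Lemma guess_large S s i : guess S s = Some i.+2 -> chain_size S s = i.+2.
Proof.
rewrite /guess; case: (related_to_past S s); last by case: ifP => // _ [].
by case: (above_past S s); case: (below_past S s).
Qed.

Definition dual (S : structure) : structure := fun x y => S y x.

Definition swap01 n := if n is 0 then 1 else if n is 1 then 0 else n.

Lemma swap01K : involutive swap01.
Proof. by case=> [|[|n]]. Qed.

Lemma related_dual S : related (dual S) =2 related S.
Proof. by move=> x y; rewrite /related orbC. Qed.

Lemma guess_dual S s : guess (dual S) s = omap swap01 (guess S s).
Proof.
rewrite /guess.
have -> : related_to_past (dual S) s = related_to_past S s.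
  exact: eq_has (related_dual S s) _.
have -> : above_past (dual S) s = below_past S s.
  by apply: eq_all => y; rewrite /= related_dual.
have -> : below_past (dual S) s = above_past S s.
  by apply: eq_all => y; rewrite /= related_dual.
have -> : chain_size (dual S) s = chain_size S s.
  by apply: eq_count => x; exact: eq_has (related_dual S x) _.
case: (related_to_past S s).
  by case: (above_past S s); case: (below_past S s).
by case: (chain_size S s) => [|[|n]].
Qed.

Lemma identifies_dual S j : identifies S j -> identifies (dual S) (swap01 j).
Proof.
move=> [io_j never]; split=> [m | i ij].
  by have [s [ms e]] := io_j m; exists s; rewrite guess_dual e.
have [|N hN] := never (swap01 i).
  by apply: contra ij => /eqP <-; rewrite swap01K.
exists N => s /hN; rewrite guess_dual; apply: contra.
by case: (guess S s) => // k /eqP [<-]; rewrite swap01K.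
Qed.

Lemma related_omega a b : related omega_t a b = [&& a != b, ~~ odd a & ~~ odd b].
Proof.
rewrite /related /omega_t eq_sym.
case: (boolP (odd a)) => oa; case: (boolP (odd b)) => ob /=;
  by rewrite ?leq_total //; case: (b == a).
Qed.

Lemma omegastar_t_dual x y : omegastar_t x y = omega_t y x.
Proof. by rewrite /omegastar_t /omega_t orbC eq_sym. Qed.

Lemma related_Ln n a b : related (Ln_t n) a b = [&& a != b, a < n & b < n].
Proof.
rewrite /related /Ln_t eq_sym.
case: (boolP (a < n)) => an; case: (boolP (b < n)) => bn /=;
  by rewrite ?leq_total //; case: (b == a).
Qed.

Section Bijection.

Variables f g : nat -> nat.
Hypotheses (fK : cancel f g) (gK : cancel g f).

Lemma related_iso S A : (forall x y, S x y = A (f x) (f y)) ->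
  forall x y, related S x y = related A (f x) (f y).
Proof. by move=> Sf x y; rewrite /related !Sf (inj_eq (can_inj fK)). Qed.

Lemma count_image_lt s n : (forall i, i < n -> g i <= s) ->
  count (fun x => f x < n) (iota 0 s.+1) = n.
Proof.
move=> gs; rewrite -size_filter -[RHS](size_iota 0) -[RHS](size_map g).
apply/perm_size/uniq_perm; rewrite ?filter_uniq ?iota_uniq //.
  by rewrite (map_inj_uniq (can_inj gK)) iota_uniq.
move=> x; rewrite mem_filter -{3}[x]fK (mem_map (can_inj gK)) !mem_iota0.
by case: ltnP => //= lt_fx; rewrite -[x]fK ltnS gs.
Qed.

Lemma exists_late_record (P : pred nat) :
  (forall b, exists x, b <= f x /\ P (f x)) -> forall m, exists s,
  [/\ m <= s, P (f s) & forall y, y < s -> P (f y) -> f y < f s].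
Proof.
move=> unbounded m; set B := \max_(y < m) f y.
have ex : exists x, P (f x) && (B < f x).
  by have [x [lt Px]] := unbounded B.+1; exists x; rewrite Px lt.
case: (ex_minnP ex) => s /andP[Ps Bs] minimal.
exists s; split=> // [|y ys Py].
  rewrite leqNgt; apply/negP => sm.
  by have := leq_bigmax (F := fun y : 'I_m => f y) (Ordinal sm); rewrite leqNgt Bs.
apply: leq_ltn_trans Bs; rewrite leqNgt; apply: contraTN ys => By.
by rewrite -leqNgt minimal // Py.
Qed.

Section Omega.

Variable S : structure.
Hypothesis Sf : forall x y, S x y = omega_t (f x) (f y).

Let relS x y : related S x y = [&& x != y, ~~ odd (f x) & ~~ odd (f y)].
Proof. by rewrite (related_iso Sf) related_omega (inj_eq (can_inj fK)). Qed.

(* [s] is comparable to [g 0], the copy of the least element, hence above it. *)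
Lemma omega_not_below s :
  g 0 < s -> related_to_past S s -> ~~ below_past S s.
Proof.
move=> g0s /hasP[y _]; rewrite relS => /and3P[_ es _].
have fs0 : f s != 0 by apply: contraTneq g0s => <-; rewrite fK ltnn.
apply/allPn; exists (g 0); first by rewrite mem_iota0.
rewrite negb_imply relS gK (ltn_eqF g0s) es Sf gK /omega_t (negbTE es) /= leqn0.
by apply: contra fs0 => /eqP h; rewrite -(even_halfK es) h.
Qed.

Lemma omega_guess_record s : g 0 < s -> ~~ odd (f s) ->
  (forall y, y < s -> ~~ odd (f y) -> f y < f s) -> guess S s = Some 0.
Proof.
move=> g0s es record.
have past : related_to_past S s.
  apply/hasP; exists (g 0); first by rewrite mem_iota0.
  by rewrite relS gK (gtn_eqF g0s) es.
rewrite /guess past (negbTE (omega_not_below g0s past)) andbT.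
suff -> : above_past S s by [].
apply/allP => y; rewrite mem_iota0 => ys; apply/implyP.
rewrite relS Sf /omega_t => /and3P[_ ey _]; rewrite (negbTE ey) (negbTE es).
exact/half_leq/ltnW/record.
Qed.

Lemma omega_chain_size_unbounded k : eventually (fun s => k < chain_size S s).
Proof.
have [N early] := eventually_gt_image (fun i => g i.*2) k.+2.
exists N => s /early small.
have le_s i : i < k.+2 -> g i.*2 <= s by move/small/ltnW.
rewrite /chain_size -size_filter.
apply: (@leq_trans (size [seq g i.*2 | i <- iota 0 k.+2])).
  by rewrite size_map size_iota.
apply: uniq_leq_size.
  by rewrite map_inj_uniq ?iota_uniq // => i j /(can_inj gK) /double_inj.
move=> x /mapP[i]; rewrite mem_iota0 => ik ->.
rewrite mem_filter mem_iota0 ltnS le_s // andbT.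
(* A distinct chain partner of [g i.*2]: [g 2] if [i = 0], else [g 0]. *)
apply/hasP; exists (g (i == 0 : nat).*2).
  by rewrite mem_iota0 ltnS le_s //; case: (i == 0).
rewrite relS !gK !odd_double (inj_eq (can_inj gK)) (inj_eq double_inj) !andbT.
by case: (i =P 0) => [-> | /eqP/negPf ->].
Qed.

Lemma omega_identifies : identifies S 0.
Proof.
split=> [m | [// | [_ | i _]]].
- have even_unbounded b : exists x, b <= f x /\ ~~ odd (f x).
    by exists (g b.*2); rewrite gK odd_double -addnn leq_addr.
  have [s [ms es record]] :=
    exists_late_record (P := fun a => ~~ odd a) even_unbounded (maxn m (g 0).+1).
  rewrite geq_max in ms; case/andP: ms => ms g0s.
  by exists s; split; last exact: omega_guess_record.
- exists (g 0).+1 => s g0s; apply/eqP => /guess_one/andP[past].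
  exact/negP/(omega_not_below g0s past).
- have [N hN] := omega_chain_size_unbounded i.+2.
  exists N => s /hN lt; apply/eqP => /guess_large e.
  by rewrite e ltnn in lt.
Qed.

End Omega.

Section Chain.

Variables (n : nat) (S : structure).
Hypothesis Sf : forall x y, S x y = Ln_t n.+2 (f x) (f y).

Let relS x y : related S x y = [&& x != y, f x < n.+2 & f y < n.+2].
Proof. by rewrite (related_iso Sf) related_Ln (inj_eq (can_inj fK)). Qed.

Lemma Ln_guess : eventually (fun s => guess S s = Some n.+2).
Proof.
have [N hN] := eventually_gt_image g n.+2.
exists N => s /hN chain_early.
have isolated : ~~ related_to_past S s.
  apply/hasPn => y _; rewrite relS; apply/negP => /and3P[_ fs _].
  by have := chain_early _ fs; rewrite fK ltnn.
have size_n : chain_size S s = n.+2.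
  have <- := count_image_lt (fun i lt_in => ltnW (chain_early i lt_in)).
  apply: eq_in_count => x; rewrite mem_iota0 ltnS => xs.
  apply/hasP/idP => [[y _] | fx]; first by rewrite relS => /and3P[].
  exists (g (f x == 0 : nat)).
    by rewrite mem_iota0 ltnS; apply/ltnW/chain_early; case: (f x == 0).
  rewrite relS gK fx -(can2_eq fK gK) /=.
  by case: (f x =P 0) => [-> | /eqP/negPf ->].
by rewrite /guess (negbTE isolated) size_n.
Qed.

Lemma Ln_identifies : identifies S n.+2.
Proof.
split; first exact/eventually_io/Ln_guess.
have [N hN] := Ln_guess.
by move=> i ni; exists N => s /hN ->; apply: contra ni => /eqP[->].
Qed.

End Chain.

End Bijection.

Lemma Fstar_identifies S j : iso S (Fstar j) -> identifies S j.
Proof.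
move=> [f [[g fK gK] Sf]]; case: j Sf => [|[|n]] /= Sf.
- exact: (omega_identifies fK gK Sf).
- apply: (identifies_dual (S := dual S) (j := 0)).
  by apply: (omega_identifies fK gK) => x y; rewrite /dual Sf omegastar_t_dual.
- exact: (Ln_identifies fK gK Sf).
Qed.

Theorem mainTheorem17 : PL_learnable_Fstar.
Proof.
exists guess_learner => S [j Sj] i.
have [_ never] := Fstar_identifies Sj.
split=> [io_i | /Fstar_identifies [io_i _] m].
  case: (eqVneq i j) => [-> // | /never [N hN]].
  have [s [Ns]] := io_i N; rewrite guess_learner_restr.
  by move/eqP; rewrite (negbTE (hN s Ns)).
by have [s [ms e]] := io_i m; exists s; rewrite guess_learner_restr.
Qed.
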